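(* Let $\Gamma\subset k^{t\times t}$ be a basic matrix algebra, let $\mathcal D$ be the set of diagonal matrices in $\Gamma$ and $\mathcal R$ the set of matrices in $\Gamma$ with zero diagonal. (a) There exists a basis $E_1,\dots,E_r$ of $\mathcal D$ over $k$ consisting of matrices all of whose entries are $0$ and $1$, such that $E_1+\dots+E_r=I_t$, $E_\alpha E_\beta=0$ for $\alpha\ne\beta$, and $E_\alpha^2=E_\alpha$; consequently, as vector spaces, $\Gamma=\mathcal D\oplus\mathcal R=\bigl(\bigoplus_{\alpha=1}^r kE_\alpha\bigr)\oplus\bigl(\bigoplus_{\alpha,\beta=1}^r E_\alpha\mathcal R E_\beta\bigr)$. (b) The set of basic $t\times t$ algebras coincides with the set of reduced $\underline 1\times\underline 1$ algebras, where $\underline 1=(1,\dots,1)$. Namely, a basic $t\times t$ algebra $\Gamma$ is the reduced $\underline 1\times\underline 1$ algebra given by the equivalence relation on $\{1,\dots,t\}$ whose classes are $\mathcal I_1,\dots,\mathcal I_r$, where $E_\alpha=\sum_{i\in\mathcal I_\alpha}e_{ii}$, and by a family of systems of linear equations such that, for all $\alpha,\beta$, the solutions of the $(\mathcal I_\alpha,\mathcal I_\beta)$ system form the space $E_\alpha\mathcal R E_\beta$.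
   Context: $k$ is an algebraically closed field; $e_{ij}$ is the matrix unit. A basic matrix algebra is a subalgebra $\Gamma\subset k^{t\times t}$ (containing $I_t$) consisting of upper triangular matrices such that for every $[a_{ij}]\in\Gamma$ the diagonal matrix $\mathrm{diag}(a_{11},\dots,a_{tt})$ also lies in $\Gamma$. A reduced $\underline 1\times\underline 1$ algebra is an algebra $\Lambda\subset k^{t\times t}$ for which there are an equivalence relation $\sim$ on $\{1,\dots,t\}$ and, for each pair $(\mathcal I,\mathcal J)$ of classes, a finite system of linear equations $\sum_{\mathcal I\ni i<j\in\mathcal J}c^{(l)}_{ij}x_{ij}=0$, such that $\Lambda$ consists exactly of all upper triangular matrices $[s_{ij}]$ with $s_{ii}=s_{jj}$ whenever $i\sim j$ and whose entries satisfy all these systems. *)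

From HB Require Import structures.
From mathcomp Require Import all_boot all_order all_algebra.
Set Implicit Arguments. Unset Strict Implicit. Unset Printing Implicit Defensive.
Import Order.TTheory GRing.Theory.
Local Open Scope ring_scope.

Definition is_subalgebra (k : fieldType) (t : nat) (G : 'M[k]_t -> Prop) : Prop :=
  [/\ G 1%:M, G 0,
      (forall A B, G A -> G B -> G (A + B)),
      (forall (a : k) A, G A -> G (a *: A)) &
      (forall A B, G A -> G B -> G (A *m B))].

Definition upper_tri (k : fieldType) (t : nat) (A : 'M[k]_t) : Prop :=
  forall i j : 'I_t, (j < i)%N -> A i j = 0.

Definition diagonal (k : fieldType) (t : nat) (A : 'M[k]_t) : Prop :=
  forall i j : 'I_t, i != j -> A i j = 0.

Definition diag_part (k : fieldType) (t : nat) (A : 'M[k]_t) : 'M[k]_t :=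
  \matrix_(i, j) (if i == j then A i j else 0).

Definition basic_alg (k : fieldType) (t : nat) (G : 'M[k]_t -> Prop) : Prop :=
  [/\ is_subalgebra G,
      (forall A, G A -> upper_tri A) &
      (forall A, G A -> G (diag_part A))].

Definition diagD (k : fieldType) (t : nat) (G : 'M[k]_t -> Prop) (A : 'M[k]_t) :=
  G A /\ diagonal A.
Definition radR (k : fieldType) (t : nat) (G : 'M[k]_t -> Prop) (A : 'M[k]_t) :=
  G A /\ forall i : 'I_t, A i i = 0.

Definition is_equiv_rel (t : nat) (e : rel 'I_t) : Prop :=
  [/\ (forall i, e i i), (forall i j, e i j -> e j i) &
      (forall i j l, e i j -> e j l -> e i l)].
Definition eclass (t : nat) (e : rel 'I_t) (i : 'I_t) : {set 'I_t} :=
  [set j | e i j].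

(* the system of linear equations attached to the pair of classes (I, J):
   each equation is given by its coefficient matrix c, and reads
   sum_{I \ni i < j \in J} c_ij x_ij = 0 *)
Definition sys_holds (k : fieldType) (t : nat) (sysIJ : seq 'M[k]_t)
    (I J : {set 'I_t}) (S : 'M[k]_t) : Prop :=
  forall c, c \in sysIJ ->
    \sum_(i in I) \sum_(j in J | (i < j)%N) c i j * S i j = 0.

Definition reduced_by (k : fieldType) (t : nat) (e : rel 'I_t)
    (sys : {set 'I_t} -> {set 'I_t} -> seq 'M[k]_t) (S : 'M[k]_t) : Prop :=
  [/\ upper_tri S,
      (forall i j, e i j -> S i i = S j j) &
      (forall i j, sys_holds (sys (eclass e i) (eclass e j))
                              (eclass e i) (eclass e j) S)].

Definition reduced_alg (k : fieldType) (t : nat) (G : 'M[k]_t -> Prop) : Prop :=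
  is_subalgebra G /\
  exists (e : rel 'I_t) (sys : {set 'I_t} -> {set 'I_t} -> seq 'M[k]_t),
    is_equiv_rel e /\ forall S, G S <-> reduced_by e sys S.

Definition good_basis (k : fieldType) (t r : nat) (G : 'M[k]_t -> Prop)
    (E : 'I_r -> 'M[k]_t) : Prop :=
  [/\ (forall a, diagD G (E a)),
      (forall (c : 'I_r -> k), \sum_a c a *: E a = 0 -> forall a, c a = 0),
      (forall A, diagD G A -> exists c : 'I_r -> k, A = \sum_a c a *: E a),
      (forall a i j, E a i j = 0 \/ E a i j = 1) &
      [/\ \sum_a E a = 1%:M,
          (forall a b, a != b -> E a *m E b = 0) &
          (forall a, E a *m E a = E a)]].

Definition ERE (k : fieldType) (t r : nat) (G : 'M[k]_t -> Prop)
    (E : 'I_r -> 'M[k]_t) (a b : 'I_r) (Y : 'M[k]_t) : Prop :=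
  exists X, radR G X /\ Y = E a *m X *m E b.

Definition direct_decomp (k : fieldType) (t r : nat) (G : 'M[k]_t -> Prop)
    (E : 'I_r -> 'M[k]_t) : Prop :=
  [/\ (forall A, G A -> exists D0 R0, [/\ diagD G D0, radR G R0 & A = D0 + R0]),
      (forall D0 R0, diagD G D0 -> radR G R0 -> D0 + R0 = 0 -> D0 = 0 /\ R0 = 0),
      (forall a b Y, ERE G E a b Y -> radR G Y),
      (forall A, G A -> exists (c : 'I_r -> k) (Y : 'I_r -> 'I_r -> 'M[k]_t),
          (forall a b, ERE G E a b (Y a b)) /\
          A = \sum_a c a *: E a + \sum_a \sum_b Y a b) &
      (forall (c : 'I_r -> k) (Y : 'I_r -> 'I_r -> 'M[k]_t),
          (forall a b, ERE G E a b (Y a b)) ->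
          \sum_a c a *: E a + \sum_a \sum_b Y a b = 0 ->
          (forall a, c a = 0) /\ (forall a b, Y a b = 0))].

Definition rel_of_basis (k : fieldType) (t r : nat) (E : 'I_r -> 'M[k]_t) : rel 'I_t :=
  fun i j => [exists a, (E a i i == 1) && (E a j j == 1)].
Definition class_of_basis (k : fieldType) (t r : nat) (E : 'I_r -> 'M[k]_t) (a : 'I_r)
  : {set 'I_t} := [set i | E a i i == 1].

From HB Require Import structures.
From mathcomp Require Import all_boot all_order all_algebra.
From Stdlib Require Import ClassicalEpsilon Classical.
Set Implicit Arguments. Unset Strict Implicit. Unset Printing Implicit Defensive.
Import GRing.Theory.
Local Open Scope ring_scope.

(** Call i ~ j when every matrix of Gamma has equal (i,i) and (j,j) entries.
   For i, j in different classes some A in Gamma has A_ii <> A_jj, and an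
   affine combination of diag(A) and I lies in Gamma with entry 1 at i and 0 at j;
   multiplying these over all j not ~ i gives the indicator matrix E_a of the class
   of i.  Any A in Gamma is then diag(A) + (A - diag A), where diag(A) is constant
   on classes, hence a combination of the E_a, and A - diag A = sum E_a (A - diag A) E_b.
   Each E_a R E_b is a subspace of matrices supported on the strictly upper part of
   I_a x I_b, hence the solution set of finitely many linear equations; this gives
   the description of Gamma as a reduced algebra. *)

Section IndicatorMatrix.
Variables (R : nzRingType) (t : nat).

Definition indic_mx (S : {set 'I_t}) : 'M[R]_t :=
  \matrix_(i, j) ((i == j) && (i \in S))%:R.

Lemma indic_mx_delta S : indic_mx S = \sum_(i in S) delta_mx i i.
Proof.
apply/matrixP => p q; rewrite summxE !mxE.
case: (eqVneq p q) => [<-|npq] /=.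
  case pS: (p \in S).
    rewrite (bigD1 p) //= mxE !eqxx big1 ?addr0 // => i /andP [_ ip].
    by rewrite mxE eq_sym (negbTE ip).
  by rewrite big1 // => i iS; rewrite mxE; case: (eqVneq p i) => // pi; rewrite pi iS in pS.
rewrite big1 // => i _; rewrite mxE.
by case: (eqVneq p i) => [pi|//]; rewrite -pi eq_sym (negbTE npq) andbF.
Qed.

Lemma indic_mulmxE S (X : 'M[R]_t) p q : (indic_mx S *m X) p q = (p \in S)%:R * X p q.
Proof.
rewrite !mxE (bigD1 p) //= big1 ?addr0; first by rewrite mxE eqxx.
by move=> l Hl; rewrite !mxE eq_sym (negbTE Hl) mul0r.
Qed.

Lemma mulmx_indicE S (X : 'M[R]_t) p q : (X *m indic_mx S) p q = X p q * (q \in S)%:R.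
Proof.
rewrite !mxE (bigD1 q) //= big1 ?addr0; first by rewrite mxE eqxx.
by move=> l Hl; rewrite !mxE (negbTE Hl) mulr0.
Qed.

Lemma boolr_eq1 (b : bool) : ((b%:R : R) == 1) = b.
Proof. by case: b; rewrite ?eqxx // eq_sym oner_eq0. Qed.

End IndicatorMatrix.
Arguments indic_mx {R t} S.

Section StrictBlocks.
Variables (R : nzRingType) (t : nat).

Definition strict_block_supp (I J : {set 'I_t}) (X : 'M[R]_t) :=
  forall i j, ~ [&& i \in I, j \in J & (i < j)%N] -> X i j = 0.

Lemma block_sumE (c X : 'M[R]_t) (I J : {set 'I_t}) : strict_block_supp I J X ->
  \sum_(i in I) \sum_(j in J | (i < j)%N) c i j * X i j = \sum_i \sum_j c i j * X i j.
Proof.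
move=> suppX; rewrite [LHS]big_mkcond /=; apply: eq_bigr => i _.
case iI: (i \in I); last by rewrite big1 // => j _; rewrite suppX ?mulr0 // iI.
rewrite [LHS]big_mkcond /=; apply: eq_bigr => j _.
by case: ifP => // jJ_lt; rewrite suppX ?mulr0 // iI jJ_lt.
Qed.

End StrictBlocks.

Lemma ord_ltn_eqF n (p q : 'I_n) : (p < q)%N -> (p == q) = false.
Proof. by move=> lt_pq; rewrite -val_eqE /= ltn_eqF. Qed.

Section FieldMatrices.
Variables (k : fieldType) (t : nat).

Lemma diag_mulmxE (C A : 'M[k]_t) p q : diagonal C -> (C *m A) p q = C p p * A p q.
Proof.
move=> dC; rewrite !mxE (bigD1 p) //= big1 ?addr0 //.
by move=> l Hl; rewrite dC ?mul0r // eq_sym.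
Qed.

Lemma diagonal_diag_part (A : 'M[k]_t) : diagonal (diag_part A).
Proof. by move=> p q /negbTE H; rewrite mxE H. Qed.

Lemma diag_part_id (A : 'M[k]_t) : diagonal A -> diag_part A = A.
Proof.
move=> dA; apply/matrixP => p q; rewrite mxE.
by case: (eqVneq p q) => [->|H] //; rewrite dA.
Qed.

Lemma upper_tri_sub_diag_part (S : 'M[k]_t) :
  upper_tri S -> upper_tri (S - diag_part S).
Proof.
by move=> uS i j ji; rewrite !mxE uS // eq_sym (ord_ltn_eqF ji) oppr0 addr0.
Qed.

Lemma eq_sys_holds cs (I J : {set 'I_t}) (X S : 'M[k]_t) :
  (forall p q, p \in I -> q \in J -> (p < q)%N -> X p q = S p q) ->
  sys_holds cs I J X -> sys_holds cs I J S.
Proof.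
move=> XS Xeqs c cin; rewrite -[RHS](Xeqs c cin); apply: eq_bigr => i iI.
by apply: eq_bigr => j /andP [jJ lt_ij]; rewrite XS.
Qed.

Lemma strict_block_supp_indic (I J : {set 'I_t}) (Y : 'M[k]_t) :
  upper_tri Y -> (forall i, Y i i = 0) ->
  strict_block_supp I J (indic_mx I *m Y *m indic_mx J).
Proof.
move=> uY Y0 p q pq; rewrite mulmx_indicE indic_mulmxE.
case pI: (p \in I); last by rewrite !mul0r.
case qJ: (q \in J); last by rewrite mulr0.
have : ~~ (p < q)%N by apply/negP => lt_pq; apply: pq; rewrite pI qJ lt_pq.
rewrite -leqNgt leq_eqVlt => /orP [/eqP qp|lt_qp].
  by rewrite (val_inj qp) Y0 mulr0 mul0r.
by rewrite uY // mulr0 mul0r.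
Qed.

End FieldMatrices.

Section LinearEquations.
Variable k : fieldType.

Lemma closed_vspace (V : vectType k) (W : V -> Prop) :
  W 0 -> (forall u v, W u -> W v -> W (u + v)) -> (forall a v, W v -> W (a *: v)) ->
  exists U : {vspace V}, forall v, W v <-> v \in U.
Proof.
move=> W0 WD WZ.
(* Adjoining to U a vector of W outside U raises \dim U, which is bounded by \dim {:V}. *)
have grow d : exists U : {vspace V},
    (forall v, v \in U -> W v) /\ ((forall w, W w -> w \in U) \/ (d <= \dim U)%N).
  elim: d => [|d [U [UW [WU|dU]]]].
  - exists 0%VS; split; last by right.
    by move=> v; rewrite memv0 => /eqP ->.
  - by exists U; split => //; left.
  - case: (classic (forall w, W w -> w \in U)) => [WU|/not_all_ex_not [w]].
      by exists U; split => //; left.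
    move=> /(imply_to_and (W w)) [Ww wU].
    exists (U + <[w]>)%VS; split.
      move=> v /memv_addP [u uU [v' /vlineP [a ->] ->]].
      by apply: WD; [apply: UW | apply: WZ].
    right; apply: (leq_ltn_trans dU); rewrite (ltn_leqif (dimv_leqif_eq (addvSl U <[w]>))).
    apply/negP => /eqP UE; apply: wU; rewrite UE.
    by have := memv_add (mem0v U) (memv_line w); rewrite add0r.
have [U [UW [WU|dU]]] := grow (\dim {:V}).+1.
  by exists U => v; split; [apply: WU | apply: UW].
by have := dimvS (subvf U); rewrite leqNgt dU.
Qed.

(* Each equation reads off one entry of [X - projv U X], which vanishes exactly on [U]. *)
Lemma closed_linear_eqs (m n : nat) (W : 'M[k]_(m, n) -> Prop) :
  W 0 -> (forall A B, W A -> W B -> W (A + B)) -> (forall a A, W A -> W (a *: A)) ->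
  exists cs : seq 'M[k]_(m, n), forall X, W X <->
    (forall c, c \in cs -> \sum_i \sum_j c i j * X i j = 0).
Proof.
move=> W0 WD WZ; have [U WU] := closed_vspace W0 WD WZ.
pose f := projv U.
pose c (pq : 'I_m * 'I_n) : 'M[k]_(m, n) :=
  \matrix_(i, j) ((delta_mx i j - f (delta_mx i j)) pq.1 pq.2).
have eqnE pq (X : 'M[k]_(m, n)) :
    \sum_i \sum_j c pq i j * X i j = (X - f X) pq.1 pq.2.
  have -> : X - f X = \sum_i \sum_j X i j *: (delta_mx i j - f (delta_mx i j)).
    rewrite {1 2}[X]matrix_sum_delta linear_sum /= -sumrB.
    apply: eq_bigr => i _; rewrite linear_sum /= -sumrB.
    by apply: eq_bigr => j _; rewrite linearZ /= scalerBr.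
  rewrite summxE; apply: eq_bigr => i _; rewrite summxE; apply: eq_bigr => j _.
  by rewrite !mxE mulrC.
exists [seq c pq | pq <- enum {: 'I_m * 'I_n}] => X; split.
  by move=> /WU XU _ /mapP [pq _ ->]; rewrite eqnE /f projv_id // subrr mxE.
move=> Xeqs; apply/WU.
have -> : X = f X.
  apply/eqP; rewrite -subr_eq0; apply/eqP/matrixP => p q.
  rewrite -[_ p q]/((X - f X) (p, q).1 (p, q).2) -eqnE mxE; apply: Xeqs.
  by apply/mapP; exists (p, q); rewrite ?mem_enum.
exact: memv_proj.
Qed.

End LinearEquations.

Section BasicAlgebra.
Variables (k : fieldType) (t : nat) (G : 'M[k]_t -> Prop).
Hypothesis basicG : basic_alg G.

Lemma G1 : G 1%:M. Proof. by case: basicG => [[]]. Qed.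
Lemma G0 : G 0. Proof. by case: basicG => [[]]. Qed.
Lemma GD A B : G A -> G B -> G (A + B). Proof. by case: basicG => [[_ _ H _ _] _ _]; apply: H. Qed.
Lemma GZ a A : G A -> G (a *: A). Proof. by case: basicG => [[_ _ _ H _] _ _]; apply: H. Qed.
Lemma GM A B : G A -> G B -> G (A *m B). Proof. by case: basicG => [[_ _ _ _ H] _ _]; apply: H. Qed.
Lemma G_upper_tri A : G A -> upper_tri A. Proof. by case: basicG => _ H _; apply: H. Qed.
Lemma G_diag_part A : G A -> G (diag_part A). Proof. by case: basicG => _ _ H; apply: H. Qed.

Lemma GB A B : G A -> G B -> G (A - B).
Proof. by move=> GA GB; rewrite -scaleN1r; apply: GD => //; apply: GZ. Qed.

Lemma G_sum (I : finType) (P : pred I) (F : I -> 'M[k]_t) :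
  (forall i, P i -> G (F i)) -> G (\sum_(i | P i) F i).
Proof. by move=> GF; apply: big_ind => //; [exact: G0 | exact: GD]. Qed.

Lemma radR_sub_diag_part A : G A -> radR G (A - diag_part A).
Proof.
by move=> GA; split; [apply: GB => //; apply: G_diag_part | move=> i; rewrite !mxE eqxx subrr].
Qed.

Definition diag_eqv (i j : 'I_t) : bool :=
  if excluded_middle_informative (forall A, G A -> A i i = A j j) then true else false.

Lemma diag_eqvP i j : reflect (forall A, G A -> A i i = A j j) (diag_eqv i j).
Proof. by rewrite /diag_eqv; case: excluded_middle_informative => h; constructor. Qed.

Lemma diag_eqv_refl i : diag_eqv i i. Proof. by apply/diag_eqvP. Qed.

Lemma diag_eqv_sym i j : diag_eqv i j = diag_eqv j i.
Proof. by apply/diag_eqvP/diag_eqvP => H A GA; rewrite H. Qed.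

Lemma diag_eqv_trans i j l : diag_eqv i j -> diag_eqv j l -> diag_eqv i l.
Proof. by move=> /diag_eqvP H1 /diag_eqvP H2; apply/diag_eqvP => A GA; rewrite H1 ?H2. Qed.

Lemma eclass_eq i j : (eclass diag_eqv i == eclass diag_eqv j) = diag_eqv i j.
Proof.
apply/eqP/idP => [ij|ij].
  have : j \in eclass diag_eqv j by rewrite inE diag_eqv_refl.
  by rewrite -ij inE.
apply/setP => l; rewrite !inE; apply/idP/idP; last exact: diag_eqv_trans.
by apply: diag_eqv_trans; rewrite diag_eqv_sym.
Qed.

Lemma separating_diag i j : ~~ diag_eqv i j ->
  exists C, [/\ G C, diagonal C, C i i = 1 & C j j = 0].
Proof.
move=> /diag_eqvP /not_all_ex_not [B /(imply_to_and (G B)) [BG Bij]].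
have Bij0 : B i i - B j j != 0 by rewrite subr_eq0; apply/eqP.
pose C := (B i i - B j j)^-1 *: (diag_part B - B j j *: 1%:M).
have C_entry l : C l l = (B i i - B j j)^-1 * (B l l - B j j).
  by rewrite !mxE !eqxx mulr1.
exists C; split.
- by apply: GZ; apply: GB; [exact: G_diag_part | apply: GZ; exact: G1].
- by move=> p q /negbTE pq; rewrite !mxE pq mulr0 subrr mulr0.
- by rewrite C_entry mulVf.
- by rewrite C_entry subrr mulr0.
Qed.

Lemma separating_diag_seq i (s : seq 'I_t) : {in s, forall j, ~~ diag_eqv i j} ->
  exists A, [/\ G A, diagonal A, A i i = 1 & {in s, forall j, A j j = 0}].
Proof.
elim: s => [|j s IH] s_sep.
  exists 1%:M; split => //; first exact: G1.
    by move=> p q /negbTE pq; rewrite mxE pq.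
  by rewrite mxE eqxx.
have [A [GA dA Aii As]] : exists A, [/\ G A, diagonal A, A i i = 1 &
    {in s, forall j, A j j = 0}].
  by apply: IH => l ls; apply: s_sep; rewrite in_cons ls orbT.
have [C [GC dC Cii Cjj]] := separating_diag (s_sep j (mem_head j s)).
exists (C *m A); split.
- exact: GM.
- by move=> p q pq; rewrite diag_mulmxE // dA // mulr0.
- by rewrite diag_mulmxE // Cii Aii mulr1.
- move=> l; rewrite in_cons => /predU1P [->|ls]; rewrite diag_mulmxE //.
    by rewrite Cjj mul0r.
  by rewrite As // mulr0.
Qed.

Lemma G_indic_eclass i : G (indic_mx (eclass diag_eqv i)).
Proof.
have sep : {in enum [set j | ~~ diag_eqv i j], forall j, ~~ diag_eqv i j}.
  by move=> j; rewrite mem_enum inE.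
have [A [GA dA Aii As]] := separating_diag_seq sep.
suff -> : indic_mx (eclass diag_eqv i) = A by [].
apply/matrixP => p q; rewrite mxE.
case: (eqVneq p q) => [<-|pq] /=; last by rewrite dA.
rewrite inE; case: (boolP (diag_eqv i p)) => [/diag_eqvP <- //|ip].
by rewrite As // mem_enum inE ip.
Qed.

Definition classes : {set {set 'I_t}} := eclass diag_eqv @: [set: 'I_t].
Definition nclasses := #|classes|.
Definition block (a : 'I_nclasses) : {set 'I_t} := enum_val a.

Definition class_idx (p : 'I_t) : 'I_nclasses :=
  enum_rank_in (imset_f (eclass diag_eqv) (in_setT p)) (eclass diag_eqv p).

Lemma block_class_idx p : block (class_idx p) = eclass diag_eqv p.
Proof. by rewrite /block /class_idx enum_rankK_in // imset_f ?in_setT. Qed.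

Lemma block_eclass a : exists i, block a == eclass diag_eqv i.
Proof. by rewrite /block; have /imsetP [i _ ->] := enum_valP a; exists i. Qed.

Definition class_rep a : 'I_t := xchoose (block_eclass a).

Lemma mem_block p a : (p \in block a) = (class_idx p == a).
Proof.
apply/idP/eqP => [pa|<-]; last by rewrite block_class_idx inE diag_eqv_refl.
have [i /eqP ai] := block_eclass a; rewrite ai inE in pa.
apply: enum_val_inj; rewrite -/(block _) -/(block _) block_class_idx ai.
by apply/eqP; rewrite eclass_eq diag_eqv_sym.
Qed.

Lemma class_idx_eq p q : (class_idx p == class_idx q) = diag_eqv p q.
Proof. by rewrite -mem_block block_class_idx inE diag_eqv_sym. Qed.

Lemma class_idx_rep a : class_idx (class_rep a) = a.
Proof. by apply/eqP; rewrite -mem_block (eqP (xchooseP (block_eclass a))) inE diag_eqv_refl. Qed.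

Lemma G_class_const S : G S -> forall i j, class_idx i = class_idx j -> S i i = S j j.
Proof. by move=> GS i j /eqP; rewrite class_idx_eq => /diag_eqvP; apply. Qed.

Definition class_idem a : 'M[k]_t := indic_mx (block a).

Lemma class_idemE a p q : class_idem a p q = ((p == q) && (class_idx p == a))%:R.
Proof. by rewrite mxE mem_block. Qed.

Lemma G_class_idem a : G (class_idem a).
Proof. by rewrite /class_idem; have [i /eqP ->] := block_eclass a; exact: G_indic_eclass. Qed.

Lemma diagonal_class_idem a : diagonal (class_idem a).
Proof. by move=> p q /negbTE pq; rewrite class_idemE pq. Qed.

Lemma sum_scale_class_idemE (c : 'I_nclasses -> k) p q :
  (\sum_a c a *: class_idem a) p q = (p == q)%:R * c (class_idx p).
Proof.
rewrite summxE (bigD1 (class_idx p)) //= big1 => [|a /negbTE pa]; last first.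
  by rewrite mxE class_idemE [class_idx p == a]eq_sym pa andbF mulr0.
by rewrite mxE class_idemE eqxx andbT mulrC addr0.
Qed.

Lemma sum_class_idem : \sum_a class_idem a = 1%:M.
Proof.
apply/matrixP => p q; have := sum_scale_class_idemE (fun=> 1) p q.
by rewrite mulr1 mxE; under eq_bigr do rewrite scale1r.
Qed.

Lemma class_idem_mul a b :
  class_idem a *m class_idem b = if a == b then class_idem a else 0.
Proof.
apply/matrixP => p q; rewrite diag_mulmxE; last exact: diagonal_class_idem.
case: (eqVneq a b) => [<-|ab]; rewrite !class_idemE eqxx /=.
  by case: (class_idx p == a); rewrite ?mul0r ?mul1r ?andbF.
rewrite mxE; case: (eqVneq (class_idx p) a) => [->|]; last by rewrite mul0r.
by rewrite eq_sym (negbTE ab) andbF mulr0.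
Qed.

Lemma class_idem_mulmxE a b (X : 'M[k]_t) p q :
  (class_idem a *m X *m class_idem b) p q =
  (class_idx p == a)%:R * X p q * (class_idx q == b)%:R.
Proof. by rewrite mulmx_indicE indic_mulmxE !mem_block. Qed.

Lemma sum_class_idem_blocks (X : 'M[k]_t) :
  \sum_a \sum_b (class_idem a *m X *m class_idem b) = X.
Proof.
transitivity ((\sum_a class_idem a) *m X *m (\sum_b class_idem b)).
  by rewrite !mulmx_suml; apply: eq_bigr => a _; rewrite mulmx_sumr.
by rewrite sum_class_idem mul1mx mulmx1.
Qed.

Lemma diag_part_class_const (S : 'M[k]_t) :
  (forall i j, class_idx i = class_idx j -> S i i = S j j) ->
  diag_part S = \sum_a S (class_rep a) (class_rep a) *: class_idem a.
Proof.
move=> S_const; apply/matrixP => p q; rewrite sum_scale_class_idemE mxE.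
case: (eqVneq p q) => [<-|pq]; last by rewrite mul0r.
by rewrite mul1r; apply: S_const; rewrite class_idx_rep.
Qed.

Lemma good_basis_class_idem : good_basis G class_idem.
Proof.
split.
- by move=> a; split; [exact: G_class_idem | exact: diagonal_class_idem].
- move=> c c0 a; have := congr1 (fun M : 'M[k]_t => M (class_rep a) (class_rep a)) c0.
  by rewrite /= sum_scale_class_idemE eqxx mul1r class_idx_rep mxE.
- move=> A [GA dA]; exists (fun a => A (class_rep a) (class_rep a)).
  by rewrite -{1}(diag_part_id dA) (diag_part_class_const (G_class_const GA)).
- by move=> a i j; rewrite class_idemE; case: (_ && _); [right|left].
split; first exact: sum_class_idem.
  by move=> a b /negbTE ab; rewrite class_idem_mul ab.
by move=> a; rewrite class_idem_mul eqxx.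
Qed.

Lemma class_of_basis_idem a : class_of_basis class_idem a = block a.
Proof. by apply/setP => p; rewrite !inE class_idemE eqxx boolr_eq1 mem_block. Qed.

Lemma rel_of_basis_idem i j : rel_of_basis class_idem i j = (class_idx i == class_idx j).
Proof.
apply/existsP/eqP => [[a]|ij]; last by exists (class_idx j); rewrite !class_idemE !eqxx !boolr_eq1 ij eqxx.
by rewrite !class_idemE !eqxx !boolr_eq1 => /andP [/eqP -> /eqP ->].
Qed.

Lemma eclass_rel_of_basis i : eclass (rel_of_basis class_idem) i = block (class_idx i).
Proof. by apply/setP => p; rewrite !inE rel_of_basis_idem mem_block eq_sym. Qed.

Lemma rel_of_basis_equiv : is_equiv_rel (rel_of_basis class_idem).
Proof.
split=> [i|i j|i j l]; rewrite !rel_of_basis_idem //; first by rewrite eq_sym.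
by move=> /eqP -> /eqP ->.
Qed.

Lemma ERE_radR a b Y : ERE G class_idem a b Y -> radR G Y.
Proof.
move=> [X [[GX X0] ->]]; split; first by apply: GM; [apply: GM | ]; try exact: G_class_idem.
by move=> i; rewrite class_idem_mulmxE X0 mulr0 mul0r.
Qed.

Lemma ERE_entry a b Y p q : ERE G class_idem a b Y ->
  ~~ ((class_idx p == a) && (class_idx q == b)) -> Y p q = 0.
Proof.
move=> [X [_ ->]]; rewrite class_idem_mulmxE.
by case: (class_idx p == a) => /=; [move/negbTE ->; rewrite mulr0 | rewrite !mul0r].
Qed.

Lemma sum_ERE_entry (Y : 'I_nclasses -> 'I_nclasses -> 'M[k]_t) p q :
  (forall a b, ERE G class_idem a b (Y a b)) ->
  (\sum_a \sum_b Y a b) p q = Y (class_idx p) (class_idx q) p q.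
Proof.
move=> EREY; rewrite summxE (bigD1 (class_idx p)) //= summxE (bigD1 (class_idx q)) //=.
rewrite !big1 ?addr0 // => [a pa|b qb].
  rewrite summxE big1 // => b _; apply: (ERE_entry (EREY a b)).
  by rewrite eq_sym (negbTE pa).
by apply: (ERE_entry (EREY _ b)); rewrite eqxx eq_sym (negbTE qb).
Qed.

Lemma direct_decomp_class_idem : direct_decomp G class_idem.
Proof.
split.
- move=> A GA; exists (diag_part A), (A - diag_part A); split.
  + by split; [exact: G_diag_part | exact: diagonal_diag_part].
  + exact: radR_sub_diag_part.
  + by rewrite addrC subrK.
- move=> D0 R0 [_ dD] [_ R00] DR0; split; apply/matrixP => p q;
    have := congr1 (fun M : 'M[k]_t => M p q) DR0; rewrite /= !mxE;
    case: (eqVneq p q) => [<-|pq].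
  + by rewrite R00 addr0.
  + by rewrite dD.
  + by rewrite R00.
  + by move=> <-; rewrite dD // add0r.
- exact: ERE_radR.
- move=> A GA; exists (fun a => A (class_rep a) (class_rep a)),
    (fun a b => class_idem a *m (A - diag_part A) *m class_idem b); split.
    by move=> a b; exists (A - diag_part A); split => //; exact: radR_sub_diag_part.
  by rewrite sum_class_idem_blocks -(diag_part_class_const (G_class_const GA)) addrC subrK.
move=> c Y EREY cY0.
have Y_diag a b p : Y a b p p = 0 by have [] := ERE_radR (EREY a b).
have c0 a : c a = 0.
  have := congr1 (fun M : 'M[k]_t => M (class_rep a) (class_rep a)) cY0.
  by rewrite /= mxE sum_scale_class_idemE sum_ERE_entry // Y_diag eqxx mul1r class_idx_rep mxE addr0.
split=> // a b; apply/matrixP => p q.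
have Y0 : \sum_a \sum_b Y a b = 0.
  by rewrite -[RHS]cY0 [X in X + _]big1 ?add0r // => a' _; rewrite c0 scale0r.
case: (boolP ((class_idx p == a) && (class_idx q == b))) => [/andP [/eqP <- /eqP <-]|pq].
  by rewrite -(sum_ERE_entry _ _ EREY) Y0.
by rewrite (ERE_entry (EREY a b) pq) mxE.
Qed.

Definition block_space (I J : {set 'I_t}) (X : 'M[k]_t) :=
  exists Y, radR G Y /\ X = indic_mx I *m Y *m indic_mx J.

Lemma block_space0 I J : block_space I J 0.
Proof.
exists 0; split; last by rewrite mulmx0 mul0mx.
by split; [exact: G0 | move=> i; rewrite mxE].
Qed.

Lemma block_spaceD I J A B : block_space I J A -> block_space I J B -> block_space I J (A + B).
Proof.
move=> [Y [[GY Y0] ->]] [Z [[GZ Z0] ->]]; exists (Y + Z); split.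
  by split; [exact: GD | move=> i; rewrite mxE Y0 Z0 addr0].
by rewrite mulmxDr mulmxDl.
Qed.

Lemma block_spaceZ I J (c : k) A : block_space I J A -> block_space I J (c *: A).
Proof.
move=> [Y [[GY Y0] ->]]; exists (c *: Y); split.
  by split; [exact: GZ | move=> i; rewrite mxE Y0 mulr0].
by rewrite scalemxAl scalemxAr.
Qed.

Definition block_eqs (I J : {set 'I_t}) : seq 'M[k]_t :=
  proj1_sig (constructive_indefinite_description _
    (closed_linear_eqs (block_space0 I J) (@block_spaceD I J) (@block_spaceZ I J))).

Lemma block_eqsP I J X : block_space I J X <->
  (forall c, c \in block_eqs I J -> \sum_i \sum_j c i j * X i j = 0).
Proof. exact: (proj2_sig (constructive_indefinite_description _
  (closed_linear_eqs (block_space0 I J) (@block_spaceD I J) (@block_spaceZ I J)))). Qed.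

Lemma block_space_supp I J X : block_space I J X -> strict_block_supp I J X.
Proof.
move=> [Y [[GY Y0] ->]]; apply: strict_block_supp_indic => //; exact: G_upper_tri.
Qed.

Lemma block_spaceP I J X : block_space I J X <->
  strict_block_supp I J X /\ sys_holds (block_eqs I J) I J X.
Proof.
split=> [IJX|[suppX eqsX]].
  have suppX := block_space_supp IJX; split=> // c cin.
  by rewrite (block_sumE c suppX); apply: (proj1 (block_eqsP I J X)).
by apply/block_eqsP => c cin; rewrite -(block_sumE c suppX); apply: eqsX.
Qed.

Lemma G_reduced_by (S : 'M[k]_t) : G S <-> reduced_by (rel_of_basis class_idem) block_eqs S.
Proof.
have off_block a b p q : p \in block a -> q \in block b -> (p < q)%N ->
    (class_idem a *m (S - diag_part S) *m class_idem b) p q = S p q.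
  move=> pa qb lt_pq; rewrite class_idem_mulmxE -!mem_block pa qb mul1r mulr1 !mxE.
  by rewrite (ord_ltn_eqF lt_pq) oppr0 addr0.
split=> [GS|[uS S_const S_eqs]].
  split; first exact: G_upper_tri.
    by move=> i j; rewrite rel_of_basis_idem => /eqP; apply: G_class_const.
  move=> i j; rewrite !eclass_rel_of_basis.
  have /block_spaceP [_] : block_space (block (class_idx i)) (block (class_idx j))
      (class_idem (class_idx i) *m (S - diag_part S) *m class_idem (class_idx j)).
    by exists (S - diag_part S); split => //; exact: radR_sub_diag_part.
  by apply: eq_sys_holds => p q pa qb lt_pq; apply: off_block.
have S_const' i j : class_idx i = class_idx j -> S i i = S j j.
  by move=> ij; apply: S_const; rewrite rel_of_basis_idem ij.
rewrite -(subrK (diag_part S) S) -{1}(sum_class_idem_blocks (S - diag_part S)) addrC.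
apply: GD; first by rewrite (diag_part_class_const S_const'); apply: G_sum => a _; apply/GZ/G_class_idem.
apply: G_sum => a _; apply: G_sum => b _.
have : block_space (block a) (block b) (class_idem a *m (S - diag_part S) *m class_idem b).
  apply/block_spaceP; split.
    apply: strict_block_supp_indic; first exact: upper_tri_sub_diag_part.
    by move=> i; rewrite !mxE eqxx subrr.
  have := S_eqs (class_rep a) (class_rep b); rewrite !eclass_rel_of_basis !class_idx_rep.
  by apply: eq_sys_holds => p q pa qb lt_pq; rewrite off_block.
by move=> [Y [[GY _] ->]]; apply: GM; [apply: GM|]; try exact: G_class_idem.
Qed.

Lemma basic_alg_reduced : reduced_alg G.
Proof.
split; first by case: basicG.
by exists (rel_of_basis class_idem), block_eqs; split; [exact: rel_of_basis_equiv | exact: G_reduced_by].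
Qed.

End BasicAlgebra.

Lemma reduced_alg_basic (k : fieldType) (t : nat) (G : 'M[k]_t -> Prop) :
  reduced_alg G -> basic_alg G.
Proof.
move=> [subG [e [sys [_ Ge]]]]; split => // [A /Ge []//|A /Ge [uA A_const A_eqs]].
apply/Ge; split.
- by move=> i j ji; rewrite mxE eq_sym (ord_ltn_eqF ji).
- by move=> i j eij; rewrite !mxE !eqxx; apply: A_const.
- move=> i j c cin; apply: big1 => p _; apply: big1 => q /andP [_ lt_pq].
  by rewrite mxE (ord_ltn_eqF lt_pq) mulr0.
Qed.

Theorem lemma2p1 (k : closedFieldType) (t : nat) :
  (forall G : 'M[k]_t -> Prop, basic_alg G ->
     exists (r : nat) (E : 'I_r -> 'M[k]_t),
       [/\ good_basis G E, direct_decomp G E,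
           [/\ (forall a, E a = \sum_(i in class_of_basis E a) delta_mx i i),
               (forall a, exists i, i \in class_of_basis E a) &
               (forall i, exists a, eclass (rel_of_basis E) i = class_of_basis E a)] &
           exists sys : {set 'I_t} -> {set 'I_t} -> seq 'M[k]_t,
             [/\ is_equiv_rel (rel_of_basis E),
                 (forall S, G S <-> reduced_by (rel_of_basis E) sys S) &
                 (forall a b (X : 'M[k]_t),
                    ERE G E a b X <->
                    ((forall i j, ~ [&& i \in class_of_basis E a,
                                        j \in class_of_basis E b & (i < j)%N] ->
                                   X i j = 0) /\
                     sys_holds (sys (class_of_basis E a) (class_of_basis E b))
                               (class_of_basis E a) (class_of_basis E b) X))]]) /\
  (forall G : 'M[k]_t -> Prop, basic_alg G <-> reduced_alg G).
Proof.
split=> [G basicG|G]; last by split; [exact: basic_alg_reduced | exact: reduced_alg_basic].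
exists (nclasses G), (@class_idem _ _ G); split.
- exact: good_basis_class_idem.
- exact: direct_decomp_class_idem.
- split=> [a|a|i]; first by rewrite class_of_basis_idem -indic_mx_delta.
    by exists (class_rep a); rewrite class_of_basis_idem mem_block class_idx_rep.
  by exists (class_idx G i); rewrite eclass_rel_of_basis class_of_basis_idem.
- exists (block_eqs basicG); split.
  + exact: rel_of_basis_equiv.
  + exact: G_reduced_by.
  + by move=> a b X; rewrite !class_of_basis_idem; exact: block_spaceP.
Qed.
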